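(* Under the setup in the context, assume in addition that the block GMRES residual $F_{j-1}^{(G)}$ has rank $L$. Then $\operatorname{rank}C_j=\operatorname{rank}\hat H_{jj}=\operatorname{rank}H_j-(j-1)L$.
   Context: Let $n,L\ge1$, $A\in\mathbb C^{n\times n}$, $B,X_0\in\mathbb C^{n\times L}$, $F_0=B-AX_0$, and let $F_0=V_1S_0$ be a reduced QR factorization ($V_1\in\mathbb C^{n\times L}$ with orthonormal columns, $S_0\in\mathbb C^{L\times L}$ upper triangular). Fix $j\ge2$. The block Arnoldi process (possibly with dependent basis vectors replaced by new orthonormal vectors) yields $W_k=[V_1,\dots,V_k]\in\mathbb C^{n\times kL}$ ($k\le j+1$) with orthonormal columns, $V_i\in\mathbb C^{n\times L}$, and the block Arnoldi relation $AW_j=W_{j+1}\bar H_j$, where $\bar H_j=(H_{ik})\in\mathbb C^{(j+1)L\times jL}$ has $L\times L$ blocks $H_{ik}$, is block upper Hessenberg ($H_{ik}=0$ for $i>k+1$), and each $H_{k+1,k}$ is upper triangular. For $k\le j$, $\bar H_k$ denotes the leading $(k+1)L\times kL$ submatrix of $\bar H_j$ and $H_k$ the leading $kL\times kL$ submatrix. $E^{[m]}\in\mathbb R^{mL\times L}$ denotes the first $L$ columns of $I_{mL}$. For $k\ge1$ with $\bar H_k$ of full column rank, the block GMRES iterate is $X_k^{(G)}=X_0+W_kY_k^{(G)}$, where $Y_k^{(G)}\in\mathbb C^{kL\times L}$ is the unique minimizer of $\|\bar H_kY-E^{[k+1]}S_0\|_F$ (Frobenius norm), and $F_k^{(G)}=B-AX_k^{(G)}$.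 Block QR factorization: assume $\bar H_j$ has full column rank. There are unitary matrices $\Omega_i=\begin{bmatrix}Q_i^{(11)}&Q_i^{(12)}\\Q_i^{(21)}&Q_i^{(22)}\end{bmatrix}\in\mathbb C^{2L\times 2L}$ ($i=1,\dots,j$, all four blocks $L\times L$); for $m\ge i+1$ put $Q_i^{(m)}=\mathrm{diag}(I_{(i-1)L},\Omega_i,I_{(m-i-1)L})\in\mathbb C^{mL\times mL}$ and $\bar Q_k=Q_k^{(k+1)}Q_{k-1}^{(k+1)}\cdots Q_1^{(k+1)}$. The $\Omega_i$ are chosen recursively so that $\bar Q_k\bar H_k=\begin{bmatrix}R_k\\ 0_{L\times kL}\end{bmatrix}$ with $R_k\in\mathbb C^{kL\times kL}$ upper triangular and nonsingular ($k=1,\dots,j$). In particular $Q_{j-1}^{(j+1)}\cdots Q_1^{(j+1)}\bar H_j=\begin{bmatrix}R_{j-1}&Z_j\\0&\hat H_{jj}\\0&H_{j+1,j}\end{bmatrix}$ for some $Z_j\in\mathbb C^{(j-1)L\times L}$, $\hat H_{jj}\in\mathbb C^{L\times L}$; correspondingly $Q_{j-1}^{(j)}\cdots Q_1^{(j)}H_j=\begin{bmatrix}R_{j-1}&Z_j\\0&\hat H_{jj}\end{bmatrix}$; and $\Omega_j\begin{bmatrix}\hat H_{jj}\\H_{j+1,j}\end{bmatrix}=\begin{bmatrix}N_j\\0\end{bmatrix}$ with $N_j$ upper triangular and nonsingular, so $R_j=\begin{bmatrix}R_{j-1}&Z_j\\0&N_j\end{bmatrix}$. Write $\bar Q_{j-1}E^{[j]}S_0=\begin{bmatrix}G_{j-1}\\\tilde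 C_j\end{bmatrix}$ with $G_{j-1}\in\mathbb C^{(j-1)L\times L}$, $\tilde C_j\in\mathbb C^{L\times L}$, and set $C_j=Q_j^{(11)}\tilde C_j$. *)

From HB Require Import structures.
From mathcomp Require Import all_boot all_order all_algebra.
Set Implicit Arguments. Unset Strict Implicit. Unset Printing Implicit Defensive.
Import Order.TTheory GRing.Theory Num.Theory.
Local Open Scope ring_scope.

Section BlockDefs.
Variable C : numClosedFieldType.

Definition ctr (m p : nat) (M : 'M[C]_(m, p)) : 'M[C]_(p, m) :=
  (map_mx Num.conj M)^T.

(* entry of M at (0-based) nat indices, 0 if out of range *)
Definition entry (m p : nat) (M : 'M[C]_(m, p)) (i k : nat) : C :=
  match @insub nat (fun x => x < m)%N 'I_m i, @insub nat (fun x => x < p)%N 'I_p k with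
  | Some a, Some b => M a b
  | _, _ => 0
  end.

Definition lsub (q r : nat) (m p : nat) (M : 'M[C]_(m, p)) : 'M[C]_(q, r) :=
  \matrix_(i < q, k < r) entry M i k.

(* the (a,b) block of size L x L, 1-based block indices *)
Definition blk (L : nat) (a b : nat) (m p : nat) (M : 'M[C]_(m, p)) : 'M[C]_L :=
  \matrix_(i < L, k < L) entry M ((a.-1) * L + i)%N ((b.-1) * L + k)%N.

Definition upper_tri (L : nat) (M : 'M[C]_L) : Prop :=
  forall i k : 'I_L, (k < i)%N -> M i k = 0.

Definition frob2 (m p : nat) (M : 'M[C]_(m, p)) : C :=
  \sum_(i < m) \sum_(k < p) `|M i k| ^+ 2.

Definition Eblk (L m : nat) : 'M[C]_(m * L, L) := lsub (m * L) L (1%:M : 'M[C]_(m * L)).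

(* Q_i^(m) = diag(I_{(i-1)L}, Omega_i, I_{(m-i-1)L}) *)
Definition Qemb (L : nat) (Om : nat -> 'M[C]_(2 * L)) (i m : nat) : 'M[C]_(m * L) :=
  \matrix_(r < m * L, c < m * L)
    if [&& ((i.-1) * L <= r)%N, (r < (i.-1) * L + 2 * L)%N,
           ((i.-1) * L <= c)%N & (c < (i.-1) * L + 2 * L)%N]
    then entry (Om i) (r - (i.-1) * L)%N (c - (i.-1) * L)%N
    else (r == c :> nat)%:R.

(* Q_k^(m) Q_{k-1}^(m) ... Q_1^(m) *)
Definition Qprod (L : nat) (Om : nat -> 'M[C]_(2 * L)) (m k : nat) : 'M[C]_(m * L) :=
  foldr (fun i P => Qemb Om i m *m P) 1%:M (rev (iota 1 k)).

Definition Qbar (L : nat) (Om : nat -> 'M[C]_(2 * L)) (k : nat) : 'M[C]_(k.+1 * L) :=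
  Qprod Om k.+1 k.

End BlockDefs.

From HB Require Import structures.
From mathcomp Require Import all_boot all_order all_algebra zify ring.
Set Implicit Arguments. Unset Strict Implicit. Unset Printing Implicit Defensive.
Import Order.TTheory GRing.Theory Num.Theory.
Local Open Scope ring_scope.

(* The first j-1 block rotations turn the leading jL x jL block of \bar H_j
   into [[R_{j-1}, Z_j]; [0, \hat H_jj]] with R_{j-1} invertible, so
   rank H_j = (j-1)L + rank \hat H_jj.  The last rotation Omega_j maps
   [\hat H_jj; H_{j+1,j}] to [N_j; 0], and N_j is invertible as a diagonal block
   of the invertible block triangular R_j; hence \hat H_jj = (Q_j^(11))^* N_j and
   rank \hat H_jj = rank Q_j^(11).  Finally the rotated GMRES residual
   F_{j-1} = W_j (E S_0 - H_{j-1} Y) is concentrated in its last block row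
   \tilde C_j, so rank \tilde C_j = rank F_{j-1} = L, \tilde C_j is invertible
   and rank C_j = rank Q_j^(11) too. *)

Section SelectionMatrices.
Variable C : numClosedFieldType.

Lemma entryE m p (M : 'M[C]_(m, p)) i l (hi : (i < m)%N) (hl : (l < p)%N) :
  entry M i l = M (Ordinal hi) (Ordinal hl).
Proof. by rewrite /entry !insubT. Qed.

Lemma entry_ord m p (M : 'M[C]_(m, p)) (i : 'I_m) (l : 'I_p) : entry M i l = M i l.
Proof. by rewrite (entryE _ (ltn_ord i) (ltn_ord l)); congr (M _ _); apply: val_inj. Qed.

Lemma entry_out_row m p (M : 'M[C]_(m, p)) i l : (m <= i)%N -> entry M i l = 0.
Proof. by move=> h; rewrite /entry insubF // ltnNge h. Qed.

Lemma entry_out_col m p (M : 'M[C]_(m, p)) i l : (p <= l)%N -> entry M i l = 0.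
Proof. by move=> h; rewrite /entry; case: insub => // ?; rewrite insubF // ltnNge h. Qed.

Lemma entry_tr m p (M : 'M[C]_(m, p)) i l : entry M^T i l = entry M l i.
Proof.
case: (ltnP i p) => hi; last by rewrite entry_out_row // entry_out_col.
case: (ltnP l m) => hl; last by rewrite entry_out_col // entry_out_row.
by rewrite (entryE _ hi hl) (entryE _ hl hi) mxE.
Qed.

(* [sel_mx q s o] selects the rows [o, o + q) of an [s]-row matrix (rows of
   index [>= s] read as zero); [lsub] and [blk] are two-sided selections. *)
Definition sel_mx q s o : 'M[C]_(q, s) := \matrix_(i < q, t < s) ((t : nat) == (o + i)%N)%:R.

Lemma mul_sel_mxE q s o p (M : 'M[C]_(s, p)) (i : 'I_q) (l : 'I_p) :
  (sel_mx q s o *m M) i l = entry M (o + i) l.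
Proof.
rewrite mxE; case: (ltnP (o + i) s) => h.
  rewrite (bigD1 (Ordinal h)) //= big1 ?addr0.
    by rewrite mxE eqxx mul1r (entryE _ h (ltn_ord l)); congr (M _ _); apply: val_inj.
  move=> t /eqP ht; rewrite mxE; case: eqP => [e|]; last by rewrite mul0r.
  by case: ht; apply: val_inj.
rewrite entry_out_row // big1 // => t _; rewrite mxE.
by case: eqP => [e|]; [move: (ltn_ord t); rewrite e ltnNge h | rewrite mul0r].
Qed.

Lemma entry_mul_sel_mx q s o p (M : 'M[C]_(s, p)) i l : (i < q)%N ->
  entry (sel_mx q s o *m M) i l = entry M (o + i) l.
Proof.
move=> hi; case: (ltnP l p) => hl; last by rewrite !entry_out_col.
by rewrite (entryE _ hi hl) mul_sel_mxE.
Qed.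

Lemma mul_mx_tr_selE q s o p (M : 'M[C]_(p, s)) (i : 'I_p) (l : 'I_q) :
  (M *m (sel_mx q s o)^T) i l = entry M i (o + l).
Proof. by rewrite -(trmxK (M *m _)) trmx_mul trmxK mxE mul_sel_mxE entry_tr. Qed.

Lemma mul_tr_sel_mxE q s o p (M : 'M[C]_(q, p)) (r : 'I_s) (c : 'I_p) :
  ((sel_mx q s o)^T *m M) r c =
  if (o <= r < o + q)%N then entry M (r - o) c else 0.
Proof.
rewrite mxE; case: ifP => h.
  have hu : (r - o < q)%N by lia.
  rewrite (bigD1 (Ordinal hu)) //= big1 ?addr0.
    by rewrite !mxE /= subnKC ?eqxx ?mul1r -?(entry_ord M (Ordinal hu)) //; lia.
  move=> u /eqP hu'; rewrite !mxE; case: eqP => [e|]; last by rewrite mul0r.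
  by case: hu'; apply: val_inj => /=; lia.
apply: big1 => u _; rewrite !mxE; case: eqP => [e|]; last by rewrite mul0r.
by move: h; rewrite e; have := ltn_ord u; lia.
Qed.

Lemma mul_mx_selE q s o p (M : 'M[C]_(p, q)) (r : 'I_p) (c : 'I_s) :
  (M *m sel_mx q s o) r c = if (o <= c < o + q)%N then entry M r (c - o) else 0.
Proof.
by rewrite -(trmxK (M *m _)) trmx_mul mxE mul_tr_sel_mxE entry_tr.
Qed.

Lemma sel_mx_full s : sel_mx s s 0 = 1%:M.
Proof. by apply/matrixP => i t; rewrite !mxE add0n eq_sym. Qed.

Lemma sel_mx_comp q s o u o' : (o + q <= s)%N ->
  sel_mx q s o *m sel_mx s u o' = sel_mx q u (o' + o).
Proof.
move=> h; apply/matrixP => i t; rewrite mul_sel_mxE.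
have hi : (o + i < s)%N by apply: leq_trans h; rewrite ltn_add2l.
by rewrite (entryE _ hi (ltn_ord t)) !mxE /= addnA.
Qed.

Lemma mul_sel_mx_tr q s o q' o' (i : 'I_q) (l : 'I_q') :
  (sel_mx q s o *m (sel_mx q' s o')^T) i l = ((o' + l < s) && (o' + l == o + i))%N%:R.
Proof.
rewrite mul_mx_tr_selE; case: (ltnP (o' + l) s) => h; last by rewrite entry_out_col.
by rewrite (entryE _ (ltn_ord i) h) mxE.
Qed.

Lemma sel_mx_trK q s o : (o + q <= s)%N -> sel_mx q s o *m (sel_mx q s o)^T = 1%:M.
Proof.
move=> h; apply/matrixP => i l; rewrite mul_sel_mx_tr mxE eqn_add2l eq_sym.
by rewrite (leq_trans _ h) // ltn_add2l.
Qed.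

Lemma sel_mx_tr_disjoint q s o q' o' : (o' + q' <= o)%N || (o + q <= o')%N ->
  sel_mx q s o *m (sel_mx q' s o')^T = 0.
Proof.
move=> h; apply/matrixP => i l; rewrite mul_sel_mx_tr mxE.
case: eqP => [e|]; last by rewrite andbF.
by have := ltn_ord i; have := ltn_ord l; move: h; rewrite e; lia.
Qed.

Lemma sel_mx_partition s a b : s = (a + b)%N ->
  (sel_mx a s 0)^T *m sel_mx a s 0 + (sel_mx b s a)^T *m sel_mx b s a = 1%:M.
Proof.
move=> hs; apply/matrixP => r c.
rewrite mxE !mul_tr_sel_mxE [RHS]mxE add0n leq0n /=.
case: (ltnP r a) => hr /=.
  by rewrite subn0 (entryE _ hr (ltn_ord c)) mxE /= add0n addr0 eq_sym.
have hb : (r - a < b)%N by have := ltn_ord r; lia.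
have -> : (r < a + b)%N by rewrite -hs.
by rewrite (entryE _ hb (ltn_ord c)) mxE /= subnKC // add0r eq_sym.
Qed.

Lemma lsub_sel_mx q r m p (M : 'M[C]_(m, p)) :
  lsub q r M = sel_mx q m 0 *m M *m (sel_mx r p 0)^T.
Proof.
apply/matrixP => i l; rewrite mul_mx_tr_selE mxE add0n.
case: (ltnP l p) => hl; last by rewrite !entry_out_col.
by rewrite (entryE (sel_mx q m 0 *m M) (ltn_ord i) hl) mul_sel_mxE add0n.
Qed.

Lemma lsub_id m p (M : 'M[C]_(m, p)) : lsub m p M = M.
Proof. by rewrite lsub_sel_mx !sel_mx_full trmx1 mul1mx mulmx1. Qed.

Lemma blk_sel_mx L a b m p (M : 'M[C]_(m, p)) :
  blk L a b M = sel_mx L m (a.-1 * L) *m M *m (sel_mx L p (b.-1 * L))^T.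
Proof.
apply/matrixP => i l; rewrite mul_mx_tr_selE mxE.
case: (ltnP (b.-1 * L + l) p) => hl; last by rewrite !entry_out_col.
by rewrite (entryE (sel_mx L m _ *m M) (ltn_ord i) hl) mul_sel_mxE.
Qed.

Lemma Eblk_sel_mx L m : Eblk C L m = (sel_mx L (m * L) 0)^T.
Proof. by rewrite /Eblk lsub_sel_mx sel_mx_full !mul1mx. Qed.

Lemma blk_eq0_entry L a b m p (M : 'M[C]_(m, p)) i l :
  blk L a b M = 0 -> (i < L)%N -> (l < L)%N ->
  entry M (a.-1 * L + i) (b.-1 * L + l) = 0.
Proof.
move=> h hi hl; have := congr1 (fun X : 'M_L => X (Ordinal hi) (Ordinal hl)) h.
by rewrite /= !mxE.
Qed.

Lemma lower_rows_eq0 m a p (P : 'M[C]_(m, p)) :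
  (forall (r : 'I_m) (c : 'I_p), (a <= r)%N -> P r c = 0) ->
  P = (sel_mx a m 0)^T *m (sel_mx a m 0 *m P).
Proof.
move=> h; apply/matrixP => r c; rewrite mul_tr_sel_mxE add0n /= subn0.
case: (ltnP r a) => hr; last by rewrite h.
by rewrite entry_mul_sel_mx // add0n entry_ord.
Qed.

Lemma sel_block_mx a b (M : 'M[C]_(a + b)) :
  let top := sel_mx a (a + b) 0 in let bot := sel_mx b (a + b) a in
  M = block_mx (top *m M *m top^T) (top *m M *m bot^T)
               (bot *m M *m top^T) (bot *m M *m bot^T).
Proof.
move=> top bot; apply/matrixP => i l; rewrite -[i]splitK -[l]splitK.
by case: (split i) => i'; case: (split l) => l' /=;
  rewrite ?block_mxEul ?block_mxEur ?block_mxEdl ?block_mxEdr mul_mx_tr_selE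
    -entry_ord entry_mul_sel_mx /= ?add0n.
Qed.

Lemma mxrank_linvM m p q (X : 'M[C]_(q, m)) (U : 'M[C]_(m, q)) (M : 'M[C]_(q, p)) :
  X *m U = 1%:M -> \rank (U *m M) = \rank M.
Proof.
move=> h; apply/eqP; rewrite eqn_leq mxrankM_maxr /=.
by rewrite -{1}(mul1mx M) -h -mulmxA mxrankM_maxr.
Qed.

Lemma mxrank_sel_ublock s a b (M : 'M[C]_s) : s = (a + b)%N ->
  sel_mx a s 0 *m M *m (sel_mx a s 0)^T \in unitmx ->
  sel_mx b s a *m M *m (sel_mx a s 0)^T = 0 ->
  \rank M = (a + \rank (sel_mx b s a *m M *m (sel_mx b s a)^T))%N.
Proof.
move=> hs; subst s; rewrite {3}(sel_block_mx M).
set R := _ *m _ *m _ => uR ->; set Z := _ *m _ *m _; set H := _ *m M *m _.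
have -> : block_mx R Z 0 H = block_mx R 0 0 H *m block_mx 1%:M (invmx R *m Z) 0 1%:M.
  by rewrite mulmx_block !mulmx0 !mul0mx !mulmx1 !addr0 !add0r mulmxA mulmxV ?mul1mx.
rewrite mxrankMfree ?rank_diag_block_mx ?(mxrank_unit uR) //.
by rewrite row_free_unit unitmxE det_ublock !det1 mulr1 unitr1.
Qed.

Lemma unitmx_sel_ublock s a b (M : 'M[C]_s) : s = (a + b)%N ->
  sel_mx b s a *m M *m (sel_mx a s 0)^T = 0 -> M \in unitmx ->
  sel_mx b s a *m M *m (sel_mx b s a)^T \in unitmx.
Proof.
move=> hs; subst s; rewrite {2}(sel_block_mx M) => ->.
by rewrite !unitmxE det_ublock unitrM => /andP[].
Qed.

End SelectionMatrices.

Section ConjugateTranspose.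
Variable C : numClosedFieldType.

Lemma ctrM m n p (A : 'M[C]_(m, n)) (B : 'M[C]_(n, p)) : ctr (A *m B) = ctr B *m ctr A.
Proof. by rewrite /ctr map_mxM trmx_mul. Qed.

Lemma ctr1 s : ctr (1%:M : 'M[C]_s) = 1%:M.
Proof. by rewrite /ctr map_mx1 trmx1. Qed.

Lemma ctrD m p (A B : 'M[C]_(m, p)) : ctr (A + B) = ctr A + ctr B.
Proof. by rewrite /ctr map_mxD linearD. Qed.

Lemma ctrB m p (A B : 'M[C]_(m, p)) : ctr (A - B) = ctr A - ctr B.
Proof. by rewrite /ctr map_mxB linearB. Qed.

Lemma ctr_sel_mx q s o : ctr (sel_mx C q s o) = (sel_mx C q s o)^T.
Proof. by apply/matrixP => i l; rewrite !mxE rmorph_nat. Qed.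

Lemma ctr_tr_sel_mx q s o : ctr (sel_mx C q s o)^T = sel_mx C q s o.
Proof. by apply/matrixP => i l; rewrite !mxE rmorph_nat. Qed.

Lemma mxrank_ctr m p (M : 'M[C]_(m, p)) : \rank (ctr M) = \rank M.
Proof. by rewrite /ctr mxrank_tr mxrank_map. Qed.

End ConjugateTranspose.

Section FrobeniusNorm.
Variable C : numClosedFieldType.

Lemma frob2_trace m p (M : 'M[C]_(m, p)) : frob2 M = \tr (ctr M *m M).
Proof.
rewrite /frob2 /mxtrace exchange_big /=; apply: eq_bigr => l _.
by rewrite mxE; apply: eq_bigr => i _; rewrite !mxE normCKC.
Qed.

Lemma frob2_unitary m p (Q : 'M[C]_m) (M : 'M[C]_(m, p)) :
  ctr Q *m Q = 1%:M -> frob2 (Q *m M) = frob2 M.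
Proof. by move=> hQ; rewrite !frob2_trace ctrM -mulmxA (mulmxA (ctr Q)) hQ mul1mx. Qed.

Lemma frob2_sel_split s a b p (M : 'M[C]_(s, p)) : s = (a + b)%N ->
  frob2 M = frob2 (sel_mx C a s 0 *m M) + frob2 (sel_mx C b s a *m M).
Proof.
move=> hs; rewrite !frob2_trace !ctrM !ctr_sel_mx -mxtraceD.
by rewrite -!mulmxA -mulmxDr !mulmxA -mulmxDl sel_mx_partition // mul1mx.
Qed.

Lemma frob2N m p (M : 'M[C]_(m, p)) : frob2 (- M) = frob2 M.
Proof. by apply: eq_bigr => i _; apply: eq_bigr => l _; rewrite mxE normrN. Qed.

Lemma frob2_ge0 m p (M : 'M[C]_(m, p)) : 0 <= frob2 M.
Proof. by apply: sumr_ge0 => i _; apply: sumr_ge0 => l _; rewrite exprn_ge0. Qed.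

Lemma frob2_eq0 m p (M : 'M[C]_(m, p)) : (frob2 M == 0) = (M == 0).
Proof.
apply/idP/eqP => [|->]; last first.
  by rewrite /frob2 big1 // => i _; rewrite big1 // => l _; rewrite mxE normr0 expr0n.
have sq_ge0 (x : C) : 0 <= `|x| ^+ 2 by rewrite exprn_ge0.
move=> /eqP/psumr_eq0P h; apply/matrixP => i l; rewrite mxE.
have /psumr_eq0P hi := h (fun i _ => sumr_ge0 _ (fun l _ => sq_ge0 _)) i isT.
by apply/eqP; rewrite -normr_eq0 -[_ == 0]/((0 < 2)%N && _) -expf_eq0 hi.
Qed.

End FrobeniusNorm.

Section BlockRotations.
Variables (C : numClosedFieldType) (L : nat) (Om : nat -> 'M[C]_(2 * L)).

Local Notation window i m := (sel_mx C (2 * L) (m * L) (i.-1 * L)).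

Lemma Qemb_sel_mx i m :
  Qemb Om i m = 1%:M + (window i m)^T *m (Om i - 1%:M) *m window i m.
Proof.
apply/matrixP => r c; rewrite [RHS]mxE mul_mx_selE !mxE.
set a := (i.-1 * L)%N.
case: (boolP (a <= c < a + 2 * L)%N) => hc; last first.
  by rewrite addr0; case: ifP => //; move: hc; lia.
have hcl : (c - a < 2 * L)%N by lia.
rewrite (entryE _ (ltn_ord r) hcl) mul_tr_sel_mxE.
case: (boolP (a <= r < a + 2 * L)%N) => hr; last first.
  by rewrite addr0; case: ifP => //; move: hr; lia.
have hrl : (r - a < 2 * L)%N by lia.
rewrite andbT hr (entryE _ hrl hcl) (entryE _ hrl hcl) !mxE.
have -> : (Ordinal hrl == Ordinal hcl) = (r == c :> nat).
  by apply/eqP/eqP => [[]|e]; [lia | apply: val_inj => /=; lia].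
by rewrite addrC subrK.
Qed.

Lemma window_Qemb i m : (i.-1 * L + 2 * L <= m * L)%N ->
  window i m *m Qemb Om i m = Om i *m window i m.
Proof.
move=> hw; rewrite Qemb_sel_mx mulmxDr mulmx1 !mulmxA sel_mx_trK // mul1mx.
by rewrite mulmxBl mul1mx addrC subrK.
Qed.

Lemma Qemb_unitary i m : (i.-1 * L + 2 * L <= m * L)%N ->
  ctr (Om i) *m Om i = 1%:M -> ctr (Qemb Om i m) *m Qemb Om i m = 1%:M.
Proof.
move=> hw hu; rewrite Qemb_sel_mx; set S := window i m.
set D := ctr (Om i) - 1%:M; set E := Om i - 1%:M.
have -> : ctr (1%:M + S^T *m E *m S) = 1%:M + S^T *m D *m S.
  by rewrite ctrD ctr1 !ctrM ctr_tr_sel_mx ctr_sel_mx ctrB ctr1 mulmxA.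
have SS : S *m S^T = 1%:M by apply: sel_mx_trK.
(* (Om^* - 1) + (Om - 1) + (Om^* - 1)(Om - 1) = Om^* Om - 1 = 0 *)
have key : D + E + D *m E = 0.
  rewrite /D /E mulmxBl mulmxBr hu !mul1mx mulmx1.
  by apply/matrixP => r c; rewrite !mxE; ring.
rewrite mulmxDl mul1mx mulmxDr mulmx1 -addrA.
have -> : S^T *m D *m S *m (S^T *m E *m S) = S^T *m (D *m E) *m S.
  by rewrite -!mulmxA (mulmxA S) SS mul1mx.
have -> : S^T *m E *m S + (S^T *m D *m S + S^T *m (D *m E) *m S) =
          S^T *m (D + E + D *m E) *m S by rewrite !mulmxDr !mulmxDl addrCA addrA.
by rewrite key mulmx0 mul0mx addr0.
Qed.

Lemma Qprod_S m t : Qprod Om m t.+1 = Qemb Om t.+1 m *m Qprod Om m t.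
Proof. by rewrite /Qprod -[t.+1]addn1 iotaD rev_cat /= add1n addn1. Qed.

Lemma Qprod_unitary m t : (t.+1 * L <= m * L)%N ->
  (forall i, (1 <= i <= t)%N -> ctr (Om i) *m Om i = 1%:M) ->
  ctr (Qprod Om m t) *m Qprod Om m t = 1%:M.
Proof.
elim: t => [|t IH] ht hu; first by rewrite /Qprod /= ctr1 mulmx1.
rewrite Qprod_S ctrM mulmxA -(mulmxA (ctr _) (ctr _)) Qemb_unitary ?mulmx1.
- by apply: IH => [|i hi]; [apply: leq_trans ht; rewrite leq_mul2r leqnSn orbT | apply: hu; lia].
- by move: ht; rewrite /= !mulSn; lia.
- by apply: hu; lia.
Qed.

Local Notation trunc m := (sel_mx C (m * L) (m.+1 * L) 0).

Lemma Qemb_trunc i m : (i.-1 * L + 2 * L <= m * L)%N ->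
  trunc m *m Qemb Om i m.+1 = Qemb Om i m *m trunc m /\
  Qemb Om i m.+1 *m (trunc m)^T = (trunc m)^T *m Qemb Om i m.
Proof.
move=> hw; rewrite !Qemb_sel_mx; move: (Om i - 1%:M) => X; set E := trunc m.
have EE : E *m E^T = 1%:M by apply: sel_mx_trK; rewrite add0n leq_mul2r leqnSn orbT.
have WE : window i m *m E = window i m.+1 by rewrite sel_mx_comp // addn0.
have WEt : window i m.+1 *m E^T = window i m by rewrite -WE -mulmxA EE mulmx1.
have EWt : E *m (window i m.+1)^T = (window i m)^T by rewrite -WEt trmx_mul trmxK.
rewrite !mulmxDr !mulmxDl !mulmx1 !mul1mx; split; congr (_ + _).
  by rewrite !mulmxA EWt -!mulmxA WE.
by rewrite -!mulmxA WEt !mulmxA -trmx_mul WE.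
Qed.

Lemma Qprod_trunc m t : (t.+1 * L <= m * L)%N ->
  trunc m *m Qprod Om m.+1 t = Qprod Om m t *m trunc m /\
  Qprod Om m.+1 t *m (trunc m)^T = (trunc m)^T *m Qprod Om m t.
Proof.
elim: t => [|t IH] ht; first by rewrite /Qprod /= mulmx1 mul1mx mulmx1 mul1mx.
have [h1 h2] : trunc m *m Qprod Om m.+1 t = Qprod Om m t *m trunc m /\
               Qprod Om m.+1 t *m (trunc m)^T = (trunc m)^T *m Qprod Om m t.
  by apply: IH; apply: leq_trans ht; rewrite leq_mul2r leqnSn orbT.
have [q1 q2] := @Qemb_trunc t.+1 m (ltac:(move: ht; rewrite /= !mulSn; lia)).
rewrite !Qprod_S; split; first by rewrite mulmxA q1 -mulmxA h1 mulmxA.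
by rewrite -mulmxA h2 mulmxA q2 mulmxA.
Qed.

End BlockRotations.

Section LeastSquares.
Variable C : numClosedFieldType.

Lemma upper_factor_of_QR m a (P : 'M[C]_(m, a)) :
  (forall (r : 'I_m) (c : 'I_a), (a <= r)%N -> P r c = 0) ->
  P = (sel_mx C a m 0)^T *m lsub a a P.
Proof. by move/lower_rows_eq0 => {1}->; rewrite lsub_sel_mx sel_mx_full trmx1 mulmx1. Qed.

(* By unitary invariance the objective splits as |R Y - top (Q E)|^2 +
   |bot (Q E)|^2, so the minimizer solves R Y = top (Q E). *)
Lemma lsq_residual_QR s a b p (Q : 'M[C]_s) (H : 'M[C]_(s, a)) (E : 'M[C]_(s, p))
    (R : 'M[C]_a) (Y : 'M[C]_(a, p)) :
  s = (a + b)%N -> ctr Q *m Q = 1%:M ->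
  Q *m H = (sel_mx C a s 0)^T *m R -> R \in unitmx ->
  (forall Y', frob2 (H *m Y - E) <= frob2 (H *m Y' - E)) ->
  Q *m (E - H *m Y) = (sel_mx C b s a)^T *m (sel_mx C b s a *m (Q *m E)).
Proof.
move=> hs hQ hQH uR hmin.
set top := sel_mx C a s 0; set bot := sel_mx C b s a; set G := top *m (Q *m E).
have top_top : top *m top^T = 1%:M by apply: sel_mx_trK; rewrite hs add0n leq_addr.
have bot_top : bot *m top^T = 0 by rewrite sel_mx_tr_disjoint // add0n leqnn.
have frob2_split Y' : frob2 (H *m Y' - E) = frob2 (R *m Y' - G) + frob2 (bot *m (Q *m E)).
  rewrite -(frob2_unitary _ hQ) (frob2_sel_split _ hs) mulmxBr (mulmxA Q H) hQH -mulmxA.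
  by rewrite !mulmxBr !(mulmxA _ _^T) top_top bot_top mul1mx mul0mx sub0r frob2N.
have RY : R *m Y = G.
  have := hmin (invmx R *m G).
  rewrite !frob2_split (mulmxA R) mulmxV // mul1mx subrr lerD2r.
  have -> : frob2 (0 : 'M[C]_(a, p)) = 0 by apply/eqP; rewrite frob2_eq0.
  by move=> h; apply/eqP; rewrite -subr_eq0 -frob2_eq0 eq_le h frob2_ge0.
rewrite mulmxBr (mulmxA Q H) hQH -mulmxA RY /G (mulmxA top^T) -{1}(mul1mx (Q *m E)).
by rewrite -mulmxBl -(sel_mx_partition _ hs) addrAC subrr add0r -mulmxA.
Qed.

End LeastSquares.

Lemma hessenberg_last_block_row (C : numClosedFieldType) L k (H : 'M[C]_(k.+2 * L, k.+1 * L)) :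
  (forall b, (1 <= b <= k)%N -> blk L k.+2 b H = 0) ->
  H *m (sel_mx C (k * L) (k.+1 * L) 0)^T =
  (sel_mx C (k.+1 * L) (k.+2 * L) 0)^T *m lsub (k.+1 * L) (k * L) H.
Proof.
move=> hH; apply/matrixP => r c; rewrite mul_mx_tr_selE mul_tr_sel_mxE add0n /= subn0.
case: (ltnP r (k.+1 * L)) => hr; first by rewrite (entryE _ hr (ltn_ord c)) mxE.
have L_gt0 : (0 < L)%N by have := ltn_ord c; nia.
have hc : (c %/ L < k)%N by rewrite ltn_divLR.
have hrL : (r - k.+1 * L < L)%N by have := ltn_ord r; have := mulSnr k.+1 L; lia.
have hcL : (c %% L < L)%N by rewrite ltn_mod.
have := blk_eq0_entry (hH (c %/ L).+1 hc) hrL hcL.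
by rewrite /= subnKC // -divn_eq.
Qed.

Section RotatedHessenberg.
Variables (C : numClosedFieldType) (L k : nat) (Om : nat -> 'M[C]_(2 * L)).
Variable Hbar : 'M[C]_(k.+2 * L, k.+1 * L).
Variables (R : 'M[C]_(k * L)) (R1 : 'M[C]_(k.+1 * L)).

(* With j = k + 1: Q is \bar Q_{j-1}, Q2 applies the same rotations to \bar H_j,
   R and R1 are R_{j-1} and R_j, and Wk selects the 2L rows acted on by Omega_j. *)
Local Notation E1 := (sel_mx C (k.+1 * L) (k.+2 * L) 0).
Local Notation Ec := (sel_mx C (k * L) (k.+1 * L) 0).
Local Notation Ed := (sel_mx C L (k.+1 * L) (k * L)).
Local Notation Dk := (sel_mx C L (k.+2 * L) (k * L)).
Local Notation Wk := (sel_mx C (2 * L) (k.+2 * L) (k * L)).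
Local Notation Eup := (sel_mx C L (2 * L) 0).
Local Notation Elo := (sel_mx C L (2 * L) L).
Local Notation Q := (Qprod Om k.+1 k).
Local Notation Q2 := (Qprod Om k.+2 k).
Local Notation Om1 := (Om k.+1).

Hypothesis Q_unitary : ctr Q *m Q = 1%:M.
Hypothesis Om1_unitary : ctr Om1 *m Om1 = 1%:M.
Hypothesis Hbar_hess : Hbar *m Ec^T = E1^T *m lsub (k.+1 * L) (k * L) Hbar.
Hypothesis R_unit : R \in unitmx.
Hypothesis QR_k : Q *m lsub (k.+1 * L) (k * L) Hbar = Ec^T *m R.
Hypothesis R1_unit : R1 \in unitmx.
Hypothesis QR_k1 : Qprod Om k.+2 k.+1 *m Hbar = E1^T *m R1.

Let splitS : (k.+1 * L = k * L + L)%N. Proof. exact: mulSnr. Qed.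
Let splitSS : (k.+2 * L = k.+1 * L + L)%N. Proof. exact: mulSnr. Qed.

Let Ec_fits : (k * L <= k.+1 * L)%N.
Proof. by rewrite splitS leq_addr. Qed.

Let E1K : E1 *m E1^T = 1%:M.
Proof. by apply: sel_mx_trK; rewrite add0n splitSS leq_addr. Qed.

Let Wk_fits : (k.+1.-1 * L + 2 * L <= k.+2 * L)%N.
Proof. by rewrite /= mul2n -addnn !mulSnr addnA. Qed.

Let Wk_Qemb : Wk *m Qemb Om k.+1 k.+2 = Om1 *m Wk.
Proof. exact: window_Qemb Wk_fits. Qed.

Let Ed_E1 : Ed *m E1 = Dk.
Proof. by rewrite sel_mx_comp ?add0n // -splitS. Qed.

Let Eup_Wk : Eup *m Wk = Dk.
Proof. by rewrite sel_mx_comp ?addn0 // mul2n -addnn leq_addr. Qed.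

Lemma rotated_Hbar_leading_cols : Q2 *m (Hbar *m Ec^T) = E1^T *m (Ec^T *m R).
Proof.
have [_ Q2E1] := Qprod_trunc Om (leqnn (k.+1 * L)).
by rewrite Hbar_hess mulmxA Q2E1 -mulmxA QR_k.
Qed.

Lemma rotated_leading_Hbar : E1 *m (Q2 *m Hbar) = Q *m lsub (k.+1 * L) (k.+1 * L) Hbar.
Proof.
have [E1Q2 _] := Qprod_trunc Om (leqnn (k.+1 * L)).
by rewrite lsub_sel_mx sel_mx_full trmx1 mulmx1 !mulmxA E1Q2.
Qed.

Lemma Wk_rotated_Hbar : Wk *m (E1^T *m R1) = Om1 *m (Wk *m (Q2 *m Hbar)).
Proof. by rewrite -QR_k1 Qprod_S -mulmxA (mulmxA Wk) Wk_Qemb -mulmxA. Qed.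

Lemma R1_lower_left : Ed *m R1 *m Ec^T = 0.
Proof.
have -> : Ed *m R1 = Eup *m (Wk *m (E1^T *m R1)).
  by rewrite !mulmxA Eup_Wk -Ed_E1 -(mulmxA Ed E1) E1K mulmx1.
rewrite Wk_rotated_Hbar -!mulmxA rotated_Hbar_leading_cols (mulmxA E1^T) -trmx_mul.
rewrite sel_mx_comp ?add0n // (mulmxA Wk) sel_mx_tr_disjoint ?add0n ?leqnn //.
by rewrite mul0mx !mulmx0.
Qed.

Lemma mxrank_leading_Hbar :
  \rank (lsub (k.+1 * L) (k.+1 * L) Hbar) = (k * L + \rank (blk L k.+1 k.+1 (Q2 *m Hbar)))%N.
Proof.
have first_cols : E1 *m (Q2 *m Hbar) *m Ec^T = Ec^T *m R.
  by rewrite -!mulmxA rotated_Hbar_leading_cols mulmxA E1K mul1mx.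
rewrite -(mxrank_linvM _ Q_unitary) -rotated_leading_Hbar blk_sel_mx /= -Ed_E1 -(mulmxA Ed).
apply: (mxrank_sel_ublock splitS); rewrite -mulmxA first_cols mulmxA.
  by rewrite sel_mx_trK ?add0n // mul1mx.
by rewrite sel_mx_tr_disjoint ?add0n ?leqnn // mul0mx.
Qed.

Lemma unitmx_R1_last_block : Ed *m R1 *m Ed^T \in unitmx.
Proof. exact: unitmx_sel_ublock splitS R1_lower_left R1_unit. Qed.

Lemma rotated_window_cols :
  Om1 *m (Wk *m (Q2 *m Hbar) *m Ed^T) = Eup^T *m (Ed *m R1 *m Ed^T).
Proof.
have split2 : (2 * L = L + L)%N by rewrite mul2n addnn.
have Elo0 : Elo *m (Wk *m (E1^T *m R1) *m Ed^T) = 0.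
  rewrite !mulmxA sel_mx_comp; last by rewrite mul2n -addnn.
  by rewrite sel_mx_tr_disjoint ?add0n -?splitS ?leqnn // !mul0mx.
rewrite mulmxA -Wk_rotated_Hbar -[LHS]mul1mx -(sel_mx_partition _ split2) mulmxDl.
rewrite -!(mulmxA _^T) Elo0 mulmx0 addr0; congr (_ *m _).
by rewrite !mulmxA Eup_Wk -Ed_E1 -(mulmxA Ed E1) E1K mulmx1.
Qed.

Lemma Hhat_factor :
  blk L k.+1 k.+1 (Q2 *m Hbar) = ctr (blk L 1 1 Om1) *m (Ed *m R1 *m Ed^T).
Proof.
rewrite blk_sel_mx /= -Eup_Wk -(mulmxA Eup) -(mulmxA Eup).
rewrite -[Wk *m _ *m _]mul1mx -Om1_unitary -mulmxA rotated_window_cols.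
by rewrite blk_sel_mx mul0n !ctrM ctr_sel_mx ctr_tr_sel_mx !mulmxA.
Qed.

End RotatedHessenberg.

Section ArnoldiResidual.
Variables (C : numClosedFieldType) (n L k : nat).
Variables (A : 'M[C]_n) (B X0 : 'M[C]_(n, L)) (S0 : 'M[C]_L).
Variables (W : 'M[C]_(n, k.+2 * L)) (Hbar : 'M[C]_(k.+2 * L, k.+1 * L)).
Variables (Q : 'M[C]_(k.+1 * L)) (R : 'M[C]_(k * L)) (Y : 'M[C]_(k * L, L)).

Local Notation E1 := (sel_mx C (k.+1 * L) (k.+2 * L) 0).
Local Notation Ec := (sel_mx C (k * L) (k.+1 * L) 0).
Local Notation Ed := (sel_mx C L (k.+1 * L) (k * L)).
Local Notation Hk := (lsub (k.+1 * L) (k * L) Hbar).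
Local Notation Eb := (Eblk C L k.+1).

Hypothesis W_isometry : ctr W *m W = 1%:M.
Hypothesis F0_eq : B - A *m X0 = lsub n L W *m S0.
Hypothesis arnoldi : A *m lsub n (k.+1 * L) W = W *m Hbar.
Hypothesis Hbar_hess : Hbar *m Ec^T = E1^T *m Hk.
Hypothesis Q_unitary : ctr Q *m Q = 1%:M.
Hypothesis R_unit : R \in unitmx.
Hypothesis QR_k : Q *m Hk = Ec^T *m R.
Hypothesis Y_lsq : forall Y', frob2 (Hk *m Y - Eb *m S0) <= frob2 (Hk *m Y' - Eb *m S0).

Let lsub_first_cols q : (q <= k.+2 * L)%N -> lsub n q W = W *m (sel_mx C q (k.+2 * L) 0)^T.
Proof. by move=> hq; rewrite lsub_sel_mx sel_mx_full mul1mx. Qed.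

Let E1_fits : (k.+1 * L <= k.+2 * L)%N.
Proof. by rewrite leq_mul2r leqnSn orbT. Qed.

Let Ec_fits : (k * L <= k.+1 * L)%N.
Proof. by rewrite leq_mul2r leqnSn orbT. Qed.

Let L_fits : (L <= k.+1 * L)%N.
Proof. exact: leq_pmull. Qed.

Lemma arnoldi_residual :
  B - A *m (X0 + lsub n (k * L) W *m Y) = W *m E1^T *m (Eb *m S0 - Hk *m Y).
Proof.
have Wk : lsub n (k * L) W = W *m E1^T *m Ec^T.
  by rewrite lsub_first_cols -?mulmxA -?trmx_mul ?sel_mx_comp ?(leq_trans Ec_fits).
have V1 : lsub n L W = W *m E1^T *m Eb.
  by rewrite lsub_first_cols ?Eblk_sel_mx -?mulmxA -?trmx_mul ?sel_mx_comp ?(leq_trans L_fits).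
have AWk : A *m lsub n (k * L) W = W *m E1^T *m Hk.
  rewrite Wk mulmxA -(lsub_first_cols E1_fits) arnoldi -mulmxA Hbar_hess mulmxA.
  by rewrite lsub_first_cols.
by rewrite (mulmxDr A) opprD addrA F0_eq V1 (mulmxA A) AWk mulmxBr !mulmxA.
Qed.

Lemma mxrank_arnoldi_residual :
  \rank (B - A *m (X0 + lsub n (k * L) W *m Y)) = \rank (Ed *m (Q *m (Eb *m S0))).
Proof.
have W1_isometry : ctr (W *m E1^T) *m (W *m E1^T) = 1%:M.
  by rewrite ctrM ctr_tr_sel_mx -mulmxA (mulmxA (ctr W)) W_isometry mul1mx sel_mx_trK.
rewrite arnoldi_residual (mxrank_linvM _ W1_isometry) -(mxrank_linvM _ Q_unitary).
rewrite (lsq_residual_QR (mulSnr k L) Q_unitary QR_k R_unit Y_lsq).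
have EdK : Ed *m Ed^T = 1%:M by apply: sel_mx_trK; rewrite -mulSnr.
by rewrite (mxrank_linvM _ EdK).
Qed.

End ArnoldiResidual.

Unset Implicit Arguments.

Theorem mainTheorem4 (C : numClosedFieldType) (n L j : nat)
  (A : 'M[C]_n) (B X0 : 'M[C]_(n, L)) (S0 : 'M[C]_L)
  (W : 'M[C]_(n, j.+1 * L)) (Hbar : 'M[C]_(j.+1 * L, j * L))
  (Om : nat -> 'M[C]_(2 * L)) (Y : 'M[C]_(j.-1 * L, L)) :
  (0 < n)%N -> (0 < L)%N -> (2 <= j)%N ->
  ctr W *m W = 1%:M ->
  B - A *m X0 = lsub n L W *m S0 ->
  upper_tri S0 ->
  A *m lsub n (j * L) W = W *m Hbar ->
  (forall a b, (1 <= a <= j.+1)%N -> (1 <= b <= j)%N -> (b.+1 < a)%N ->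
     blk L a b Hbar = 0) ->
  (forall k, (1 <= k <= j)%N -> upper_tri (blk L k.+1 k Hbar)) ->
  \rank Hbar = (j * L)%N ->
  (forall i, (1 <= i <= j)%N -> ctr (Om i) *m Om i = 1%:M) ->
  (forall k, (1 <= k <= j)%N ->
     let P := Qbar Om k *m lsub (k.+1 * L) (k * L) Hbar in
     [/\ upper_tri (lsub (k * L) (k * L) P),
         lsub (k * L) (k * L) P \in unitmx &
         forall (r : 'I_(k.+1 * L)) (c : 'I_(k * L)), (k * L <= r)%N -> P r c = 0]) ->
  (forall Y' : 'M[C]_(j.-1 * L, L),
     frob2 (lsub (j * L) (j.-1 * L) Hbar *m Y - Eblk C L j *m S0)
       <= frob2 (lsub (j * L) (j.-1 * L) Hbar *m Y' - Eblk C L j *m S0)) ->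
  \rank (B - A *m (X0 + lsub n (j.-1 * L) W *m Y)) = L ->
  let Hhat := blk L j j (Qprod Om j.+1 j.-1 *m Hbar) in
  let Ctilde := blk L j 1 (Qprod Om j j.-1 *m (Eblk C L j *m S0)) in
  let Cj := blk L 1 1 (Om j) *m Ctilde in
  \rank Cj = \rank Hhat /\
  \rank Hhat = (\rank (lsub (j * L) (j * L) Hbar) - j.-1 * L)%N.
Proof.
case: j W Hbar Y => [|k] W Hbar Y _ _ // j_ge2 hW hF0 _ hAr hHess _ _ hOm hQR hmin hrk.
rewrite /= in Y hmin hrk *.
have hess : Hbar *m (sel_mx C (k * L) (k.+1 * L) 0)^T =
            (sel_mx C (k.+1 * L) (k.+2 * L) 0)^T *m lsub (k.+1 * L) (k * L) Hbar.
  by apply: hessenberg_last_block_row => b /andP[b_gt0 b_le]; apply: hHess; lia.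
have Q_unitary : ctr (Qprod Om k.+1 k) *m Qprod Om k.+1 k = 1%:M.
  by apply: Qprod_unitary => // i hi; apply: hOm; lia.
have [_ R_unit /upper_factor_of_QR QR_k] := hQR k (ltac:(lia)).
have [_ R1_unit /upper_factor_of_QR QR_k1] := hQR k.+1 (leqnn _).
rewrite lsub_id in R1_unit QR_k1.
set Hhat := blk L k.+1 k.+1 _; set Ctilde := blk L k.+1 1 _.
have Ctilde_unit : Ctilde \in unitmx.
  rewrite -row_free_unit /row_free -[X in _ == X]hrk.
  rewrite (mxrank_arnoldi_residual hW hF0 hAr hess Q_unitary R_unit QR_k hmin).
  by rewrite /Ctilde blk_sel_mx mul0n sel_mx_full trmx1 mulmx1.
have Hhat_eq := Hhat_factor (hOm k.+1 (leqnn _)) QR_k1.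
have N_unit := unitmx_R1_last_block hess QR_k R1_unit QR_k1.
split; last by rewrite (mxrank_leading_Hbar Q_unitary hess R_unit QR_k) addKn.
rewrite /Hhat Hhat_eq !mxrankMfree ?row_free_unit //.
by rewrite mxrank_ctr.
Qed.
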